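(* Let $\nu$ be an eigenvalue of the nonlocal problem with $\nu\notin\{\lambda_n\}_{n\in\mathbb N_0}$. Then $\nu$ solves $$\frac1M=\sum_{n\in\mathbb N_0}\frac{\beta_n^2}{\lambda_n-\nu},\qquad \beta_n=\int_0^1C(y)\psi_n(y)\,dy.$$ Conversely, if $\nu\in\mathbb R$ solves this equation, then $\nu$ is an eigenvalue of the nonlocal problem.
   Context: $\mathbb{T}=[0,1]$ with endpoints identified; $D,\kappa>0$; $U\in W^{2,2}(\mathbb{T})$ is a nonconstant solution of $0=DU_{xx}-U+\kappa e^U/\int_0^1e^Udy$ (periodic). Set $A(x)=\kappa\frac{e^{U(x)}}{\int_0^1e^U}-1$, $M=\frac{\kappa}{(\int_0^1e^U)^2}>0$, $C(x)=e^{U(x)}$. Nonlocal eigenvalue problem: $D\varphi_{xx}+(A(x)-\nu)\varphi=MC(x)\int_0^1C(y)\varphi(y)dy$, $\varphi\not\equiv0$, periodic boundary conditions. Local problem: $D\psi_{xx}+(A(x)-\lambda)\psi=0$, periodic; its eigenpairs $(\lambda_n,\psi_n)_{n\in\mathbb N_0}$ are real with $\{\psi_n\}$ an orthonormal basis of $L^2(0,1)$ and $\lambda_0>\lambda_1\ge\lambda_2>\lambda_3\ge\lambda_4>\cdots$. *)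

From Stdlib Require Import Reals.
From Coquelicot Require Import Coquelicot.
Open Scope R_scope.

(* 1-periodic functions on R = functions on the torus T = [0,1]/~ *)
Definition periodic1 (f : R -> R) : Prop := forall x, f (x + 1) = f x.

(* twice differentiable everywhere (classical representative of a W^{2,2}
   solution) *)
Definition twice_diff (f : R -> R) : Prop :=
  forall x, ex_derive f x /\ ex_derive (Derive f) x.

Definition d2 (f : R -> R) (x : R) : R := Derive (Derive f) x.

Definition intExpU (U : R -> R) : R := RInt (fun y => exp (U y)) 0 1.

Definition Acoef (kappa : R) (U : R -> R) (x : R) : R :=
  kappa * exp (U x) / intExpU U - 1.

Definition Mcoef (kappa : R) (U : R -> R) : R := kappa / (intExpU U) ^ 2.

Definition Ccoef (U : R -> R) (x : R) : R := exp (U x).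

Definition steady_state (D kappa : R) (U : R -> R) : Prop :=
  periodic1 U /\ twice_diff U /\
  forall x, 0 = D * d2 U x - U x + kappa * exp (U x) / intExpU U.

Definition nonconstant (U : R -> R) : Prop := exists x y, U x <> U y.

Definition nonlocal_eigenvalue (D kappa : R) (U : R -> R) (nu : R) : Prop :=
  exists phi : R -> R,
    periodic1 phi /\ twice_diff phi /\ (exists x, phi x <> 0) /\
    forall x, D * d2 phi x + (Acoef kappa U x - nu) * phi x
              = Mcoef kappa U * Ccoef U x * RInt (fun y => Ccoef U y * phi y) 0 1.

Definition local_eigenpair (D kappa : R) (U : R -> R) (lam : R) (psi : R -> R)
  : Prop :=
  periodic1 psi /\ twice_diff psi /\
  forall x, D * d2 psi x + (Acoef kappa U x - lam) * psi x = 0.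

Definition L2ip (f g : R -> R) : R := RInt (fun y => f y * g y) 0 1.

(* (lam_n, psi_n)_n is the full family of eigenpairs of the local problem:
   each is an eigenpair, {psi_n} is an orthonormal basis of L^2(0,1)
   (completeness expressed by Parseval's identity on the dense class of
   Riemann square-integrable functions), and the eigenvalues are ordered
   lam_0 > lam_1 >= lam_2 > lam_3 >= lam_4 > ... *)
Definition local_spectral_data (D kappa : R) (U : R -> R)
  (lam : nat -> R) (psi : nat -> R -> R) : Prop :=
  (forall n, local_eigenpair D kappa U (lam n) (psi n)) /\
  (forall n m, L2ip (psi n) (psi m) = if Nat.eqb n m then 1 else 0) /\
  (forall f : R -> R, ex_RInt f 0 1 -> ex_RInt (fun y => f y ^ 2) 0 1 ->
     is_series (fun n => (L2ip f (psi n)) ^ 2) (RInt (fun y => f y ^ 2) 0 1)) /\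
  (forall k : nat, lam (2 * k)%nat > lam (2 * k + 1)%nat /\
                   lam (2 * k + 1)%nat >= lam (2 * k + 2)%nat).

Definition beta (U : R -> R) (psi : nat -> R -> R) (n : nat) : R :=
  L2ip (Ccoef U) (psi n).

From Stdlib Require Import Reals Lra Lia Factorial Classical ClassicalEpsilon.
From Coquelicot Require Import Coquelicot.
Open Scope R_scope.

(* Green's identity for the periodic operator [D d^2/dx^2 + A] shows that any periodic solution
   of [D phi'' + (A - nu) phi = F] satisfies [<F, psi_n> = (lam_n - nu) <phi, psi_n>].  For a
   nonlocal eigenfunction [F = M C <C, phi>], and [<C, phi> <> 0] since otherwise every
   coefficient of [phi] would vanish; Parseval's identity [<C, phi> = sum_n beta_n <phi, psi_n>]
   then becomes the secular equation.  Conversely, as [nu] is not a local eigenvalue the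
   homogeneous periodic problem has only the trivial solution, so the 2x2 system for the
   initial data of a periodic solution of [D phi'' + (A - nu) phi = M C] is invertible, and for
   that solution the secular equation says exactly [<C, phi> = 1].  Solutions of linear
   second-order equations with continuous coefficients are built by Picard iteration and are
   unique by an energy estimate. *)

(** * Real analysis toolkit *)

Lemma continuous_Rplus (f g : R -> R) x :
  continuous f x -> continuous g x -> continuous (fun t => f t + g t) x.
Proof. exact (continuous_plus f g x). Qed.

Lemma continuous_Rminus (f g : R -> R) x :
  continuous f x -> continuous g x -> continuous (fun t => f t - g t) x.
Proof. exact (continuous_minus f g x). Qed.

Lemma continuous_Rmult (f g : R -> R) x :
  continuous f x -> continuous g x -> continuous (fun t => f t * g t) x.
Proof. exact (continuous_mult f g x). Qed.

Lemma continuous_Rconst (c x : R) : continuous (fun _ : R => c) x.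
Proof. exact (continuous_const c x). Qed.

Lemma continuous_Rsqr (f : R -> R) x : continuous f x -> continuous (fun t => f t ^ 2) x.
Proof.
  intro Hf. apply (continuous_ext (fun t => f t * f t)).
  - intro t. change (f t * f t = f t ^ 2). ring.
  - apply continuous_Rmult; exact Hf.
Qed.

Lemma continuous_of_is_derive (f : R -> R) x l : is_derive f x l -> continuous f x.
Proof. intro H. apply (@ex_derive_continuous R_AbsRing R_NormedModule). exists l. exact H. Qed.

Create HintDb continuity.

Ltac continuity_tac :=
  repeat match goal with
  | |- forall _, _ => intro
  | |- continuous (fun _ => ?c) _ => apply (continuous_Rconst c)
  | |- continuous (fun _ => _ + _) _ => apply continuous_Rplus
  | |- continuous (fun _ => _ - _) _ => apply continuous_Rminus
  | |- continuous (fun _ => _ * _) _ => apply continuous_Rmult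
  | |- continuous (fun _ => _ ^ 2) _ => apply continuous_Rsqr
  end; auto with continuity.

Lemma ex_RInt_continuous_R (f : R -> R) a b : (forall t, continuous f t) -> ex_RInt f a b.
Proof. intro Hf. apply (@ex_RInt_continuous R_CompleteNormedModule). intros t _. apply Hf. Qed.

Lemma RInt_ext_R (f g : R -> R) a b : (forall x, f x = g x) -> RInt f a b = RInt g a b.
Proof. intro H. apply RInt_ext. intros x _. apply H. Qed.

Lemma RInt_Rplus (f g : R -> R) a b : ex_RInt f a b -> ex_RInt g a b ->
  RInt (fun x => f x + g x) a b = RInt f a b + RInt g a b.
Proof. exact (RInt_plus f g a b). Qed.

Lemma RInt_Rminus (f g : R -> R) a b : ex_RInt f a b -> ex_RInt g a b ->
  RInt (fun x => f x - g x) a b = RInt f a b - RInt g a b.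
Proof. exact (RInt_minus f g a b). Qed.

Lemma RInt_Rscal (f : R -> R) c a b : ex_RInt f a b ->
  RInt (fun x => c * f x) a b = c * RInt f a b.
Proof. exact (RInt_scal f a b c). Qed.

Lemma RInt_R0 a b : RInt (fun _ => 0) a b = 0.
Proof. rewrite RInt_const. apply Rmult_0_r. Qed.

Lemma is_derive_plus_RInt (g : R -> R) c x : (forall t, continuous g t) ->
  is_derive (fun x => c + RInt g 0 x) x (g x).
Proof.
  intro Hg.
  assert (H : is_derive (RInt g 0) x (g x)).
  { apply (is_derive_RInt g (RInt g 0) 0); [| apply Hg].
    apply filter_forall. intro y.
    apply (@RInt_correct R_CompleteNormedModule), ex_RInt_continuous_R, Hg. }
  replace (g x) with (0 + g x) by ring.
  exact (is_derive_plus (fun _ => c) _ x 0 (g x) (is_derive_const c x) H).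
Qed.

Lemma abs_RInt_0_le_pow_pos (f : R -> R) C k x : 0 <= x -> (forall t, continuous f t) ->
  (forall t, 0 <= t <= x -> Rabs (f t) <= C * t ^ k) ->
  Rabs (RInt f 0 x) <= C * x ^ S k / INR (S k).
Proof.
  intros Hx Hf Hb.
  assert (Hpow : is_RInt (fun t => C * t ^ k) 0 x (C * (x ^ S k / INR (S k)))).
  { replace (x ^ S k / INR (S k)) with (x ^ S k / INR (S k) - 0 ^ S k / INR (S k))
      by (rewrite pow_i by lia; unfold Rdiv; ring).
    apply (is_RInt_scal (fun t => t ^ k)), is_RInt_pow. }
  replace (C * x ^ S k / INR (S k)) with (RInt (fun t => C * t ^ k) 0 x)
    by (rewrite (is_RInt_unique _ _ _ _ Hpow); unfold Rdiv; symmetry; apply Rmult_assoc).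
  eapply Rle_trans; [apply abs_RInt_le; [exact Hx | apply ex_RInt_continuous_R, Hf] |].
  apply RInt_le; [exact Hx | | eexists; exact Hpow |].
  - apply ex_RInt_continuous_R. intro t. apply continuous_Rabs_comp, Hf.
  - intros t Ht. apply Hb. lra.
Qed.

Lemma abs_RInt_0_le_pow (f : R -> R) C k x : (forall t, continuous f t) ->
  (forall t, Rabs t <= Rabs x -> Rabs (f t) <= C * Rabs t ^ k) ->
  Rabs (RInt f 0 x) <= C * Rabs x ^ S k / INR (S k).
Proof.
  intros Hf Hb. destruct (Rle_or_lt 0 x) as [Hx | Hx].
  - rewrite (Rabs_pos_eq x Hx). apply abs_RInt_0_le_pow_pos; [exact Hx | exact Hf |].
    intros t Ht. replace (t ^ k) with (Rabs t ^ k) by (rewrite Rabs_pos_eq; lra).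
    apply Hb. rewrite !Rabs_pos_eq; lra.
  - set (g := fun t => f (- t)).
    assert (Hg : forall t, continuous g t).
    { intro t. apply (continuous_comp (fun t => - t) f).
      - apply (ex_derive_continuous (fun t : R => - t)). auto_derive. exact I.
      - apply Hf. }
    assert (Hrefl : RInt f 0 x = - RInt g 0 (- x)).
    { rewrite <- (RInt_opp g) by apply ex_RInt_continuous_R, Hg.
      symmetry. apply is_RInt_unique, (is_RInt_comp_opp f).
      rewrite Ropp_0, Ropp_involutive. apply (@RInt_correct R_CompleteNormedModule).
      apply ex_RInt_continuous_R, Hf. }
    rewrite Hrefl, Rabs_Ropp, (Rabs_left x Hx).
    apply abs_RInt_0_le_pow_pos; [lra | exact Hg |].
    intros t Ht. replace (t ^ k) with (Rabs (- t) ^ k) by (rewrite Rabs_Ropp, Rabs_pos_eq; lra).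
    apply Hb. rewrite Rabs_Ropp, Rabs_pos_eq, Rabs_left; lra.
Qed.

Lemma abs_RInt_0_le_exp_term (f : R -> R) K L n x : (forall t, continuous f t) ->
  (forall s, Rabs s <= Rabs x -> Rabs (f s) <= L * (K * (L * Rabs s) ^ n / INR (fact n))) ->
  Rabs (RInt f 0 x) <= K * (L * Rabs x) ^ S n / INR (fact (S n)).
Proof.
  intros Hf Hb.
  assert (HF : 0 < INR (fact n)) by apply INR_fact_lt_0.
  assert (HN : 0 < INR (S n)) by (apply lt_0_INR; lia).
  replace (K * (L * Rabs x) ^ S n / INR (fact (S n)))
    with (K * L ^ S n / INR (fact n) * Rabs x ^ S n / INR (S n))
    by (rewrite fact_simpl, mult_INR, Rpow_mult_distr; field; lra).
  apply abs_RInt_0_le_pow; [exact Hf |].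
  intros s Hs. eapply Rle_trans; [apply Hb, Hs | right].
  rewrite Rpow_mult_distr. simpl (L ^ S n). field. lra.
Qed.

Lemma is_derive_Rplus (f g : R -> R) x df dg : is_derive f x df -> is_derive g x dg ->
  is_derive (fun t => f t + g t) x (df + dg).
Proof. exact (is_derive_plus f g x df dg). Qed.

Lemma is_derive_Rmult (f g : R -> R) x df dg : is_derive f x df -> is_derive g x dg ->
  is_derive (fun t => f t * g t) x (df * g x + f x * dg).
Proof. intros Hf Hg. exact (is_derive_mult f g x df dg Hf Hg Rmult_comm). Qed.

Lemma is_derive_Rcomp (f g : R -> R) x df dg : is_derive f (g x) df -> is_derive g x dg ->
  is_derive (fun t => f (g t)) x (dg * df).
Proof. exact (is_derive_comp f g x df dg). Qed.

Lemma is_derive_shift (y z : R -> R) c : (forall x, is_derive y x (z x)) ->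
  forall x, is_derive (fun t => y (t + c)) x (z (x + c)).
Proof.
  intros Hy x.
  replace (z (x + c)) with (1 * z (x + c)) by ring.
  apply (is_derive_Rcomp y (fun t => t + c)); [apply Hy |].
  auto_derive; [exact I | ring].
Qed.

Lemma continuous_bounded_on_ball (f : R -> R) R0 : 0 <= R0 -> (forall t, continuous f t) ->
  exists B, forall t, Rabs t <= R0 -> Rabs (f t) <= B.
Proof.
  intros HR0 Hf.
  destruct (continuity_ab_maj (fun t => Rabs (f t)) (- R0) R0) as [m [Hm _]].
  - lra.
  - intros c _. apply continuity_pt_filterlim, continuous_Rabs_comp, Hf.
  - exists (Rabs (f m)). intros t Ht. apply Hm. apply Rabs_le_between in Ht. lra.
Qed.

Lemma Series_eq_0 (a : nat -> R) : (forall n, a n = 0) -> Series a = 0.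
Proof.
  intro H. rewrite (Series_ext a (fun n => 0 * a n)) by (intro n; rewrite H; ring).
  rewrite Series_scal_l. ring.
Qed.

Lemma ex_series_exp_scal K x : ex_series (fun n => K * x ^ n / INR (fact n)).
Proof.
  exists (K * exp x).
  eapply is_series_ext; [| exact (is_series_scal K _ _ (is_exp_Reals x))].
  intro n. unfold scal; simpl; unfold mult; simpl. rewrite pow_n_pow. unfold Rdiv. ring.
Qed.

Lemma CVU_SP_dominated (fn : nat -> R -> R) (rr : posreal) :
  (forall x, ex_series (fun n => fn n x)) ->
  (exists A : nat -> R, ex_series A /\ forall n y, Rabs y <= rr -> Rabs (fn n y) <= A n) ->
  CVU (fun n => SP fn n) (fun x => Series (fun n => fn n x)) 0 rr.
Proof.
  intros Hpt HA.
  set (cv := fun x => exist (fun l => Un_cv (fun N => SP fn N x) l) (Series (fun n => fn n x))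
                        (proj1 (is_series_Reals _ _) (Series_correct _ (Hpt x)))).
  apply (CVN_CVU fn cv rr).
  destruct (constructive_indefinite_description _ HA) as [A [HAs Hdom]].
  assert (A_nonneg : forall n, 0 <= A n).
  { intro n. eapply Rle_trans; [apply Rabs_pos | apply (Hdom n 0)].
    rewrite Rabs_R0. left. apply cond_pos. }
  exists A, (Series A). split.
  - apply is_series_Reals.
    apply (is_series_ext A); [intro n; symmetry; apply Rabs_pos_eq, A_nonneg |].
    apply Series_correct, HAs.
  - intros n y Hy. apply Hdom. unfold Boule in Hy. rewrite Rminus_0_r in Hy. lra.
Qed.

Lemma CVU_ext (f g : nat -> R -> R) F c rr :
  (forall n x, f n x = g n x) -> CVU f F c rr -> CVU g F c rr.
Proof.
  intros Hfg H eps Heps. destruct (H eps Heps) as [N HN].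
  exists N. intros n y Hn Hy. rewrite <- Hfg. apply HN; assumption.
Qed.

Lemma CVU_shift (f : nat -> R -> R) g c rr :
  CVU f g c rr -> CVU (fun n => f (S n)) g c rr.
Proof.
  intros H eps Heps. destruct (H eps Heps) as [N HN].
  exists N. intros n y Hn Hy. apply HN; [lia | exact Hy].
Qed.

Lemma CVU_const_plus (f : nat -> R -> R) g c rr (k : R) :
  CVU f g c rr -> CVU (fun n x => k + f n x) (fun x => k + g x) c rr.
Proof.
  intros H eps Heps. destruct (H eps Heps) as [N HN].
  exists N. intros n y Hn Hy.
  replace (k + g y - (k + f n y)) with (g y - f n y) by ring. apply HN; assumption.
Qed.

Lemma CVU_mul_plus (f : nat -> R -> R) g (h k : R -> R) (rr : posreal) :
  (forall t, continuous h t) -> CVU f g 0 rr ->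
  CVU (fun n x => h x * f n x + k x) (fun x => h x * g x + k x) 0 rr.
Proof.
  intros Hh H eps Heps.
  destruct (continuous_bounded_on_ball h rr) as [B HB]; [left; apply cond_pos | exact Hh |].
  assert (HB1 : 0 < Rabs B + 1) by (pose proof (Rabs_pos B); lra).
  destruct (H (eps / (Rabs B + 1))) as [N HN]; [apply Rdiv_lt_0_compat; lra |].
  exists N. intros n y Hn Hy.
  assert (Hy' : Rabs y <= rr).
  { unfold Boule in Hy. rewrite Rminus_0_r in Hy. lra. }
  replace (h y * g y + k y - (h y * f n y + k y)) with (h y * (g y - f n y)) by ring.
  rewrite Rabs_mult.
  apply Rle_lt_trans with ((Rabs B + 1) * Rabs (g y - f n y)).
  - apply Rmult_le_compat_r; [apply Rabs_pos |].
    pose proof (HB y Hy'). pose proof (Rle_abs B). lra.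
  - replace eps with ((Rabs B + 1) * (eps / (Rabs B + 1))) by (field; lra).
    apply Rmult_lt_compat_l; [lra | apply HN; assumption].
Qed.

Lemma is_derive_CVU (f f' : nat -> R -> R) (g g' : R -> R) :
  (forall rr : posreal, CVU f g 0 rr) -> (forall rr : posreal, CVU f' g' 0 rr) ->
  (forall n x, is_derive (f n) x (f' n x)) -> forall x, is_derive g x (g' x).
Proof.
  intros Hf Hf' Hder x.
  assert (Hrr : 0 < Rabs x + 1) by (pose proof (Rabs_pos x); lra).
  set (rr := mkposreal _ Hrr).
  assert (Hx : Boule 0 rr x) by (unfold Boule; simpl; rewrite Rminus_0_r; lra).
  apply is_derive_Reals.
  apply (CVU_derivable f f' g g' 0 rr (Hf' rr)); [| | exact Hx].
  - intros y Hy. exact (CVU_cv _ _ _ _ (Hf rr) y Hy).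
  - intros n y _. apply is_derive_Reals, Hder.
Qed.

(** * Linear second-order equations *)

Definition solves_ode (q r y z : R -> R) : Prop :=
  (forall x, is_derive y x (z x)) /\ (forall x, is_derive z x (q x * y x + r x)).

Section Picard.

Variables (q r : R -> R) (a b : R).

Hypotheses (q_cont : forall t, continuous q t) (r_cont : forall t, continuous r t).

Fixpoint picard (n : nat) : (R -> R) * (R -> R) :=
  match n with
  | O => (fun _ => a, fun _ => b)
  | S n => let p := picard n in
      (fun x => a + RInt (snd p) 0 x, fun x => b + RInt (fun t => q t * fst p t + r t) 0 x)
  end.

Definition picard_y (n : nat) : R -> R := fst (picard n).

Definition picard_z (n : nat) : R -> R := snd (picard n).

Lemma picard_continuous n x : continuous (picard_y n) x /\ continuous (picard_z n) x.
Proof.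
  revert x; induction n as [| n IH]; intro x.
  - split; apply continuous_Rconst.
  - split; eapply continuous_of_is_derive; apply is_derive_plus_RInt; intro t.
    + apply (proj2 (IH t)).
    + apply continuous_Rplus; [apply continuous_Rmult | apply r_cont].
      * apply q_cont.
      * apply (proj1 (IH t)).
Qed.

#[local] Hint Resolve q_cont r_cont : continuity.
#[local] Hint Extern 1 (continuous (picard_y _) _) => exact (proj1 (picard_continuous _ _))
  : continuity.
#[local] Hint Extern 1 (continuous (picard_z _) _) => exact (proj2 (picard_continuous _ _))
  : continuity.

Lemma picard_derive n x :
  is_derive (picard_y (S n)) x (picard_z n x) /\
  is_derive (picard_z (S n)) x (q x * picard_y n x + r x).
Proof.
  split.
  - apply (is_derive_plus_RInt (picard_z n)). continuity_tac.
  - apply (is_derive_plus_RInt (fun t => q t * picard_y n t + r t)). continuity_tac.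
Qed.

Lemma picard_at_0 n : picard_y n 0 = a /\ picard_z n 0 = b.
Proof.
  destruct n as [| n]; [split; reflexivity |].
  unfold picard_y, picard_z; simpl. rewrite !RInt_point. split; apply Rplus_0_r.
Qed.

Definition picard_dy (n : nat) (x : R) : R := picard_y (S n) x - picard_y n x.

Definition picard_dz (n : nat) (x : R) : R := picard_z (S n) x - picard_z n x.

Lemma picard_increment_continuous n x :
  continuous (picard_dy n) x /\ continuous (picard_dz n) x.
Proof. split; apply continuous_Rminus; continuity_tac. Qed.

#[local] Hint Extern 1 (continuous (picard_dy _) _) =>
  exact (proj1 (picard_increment_continuous _ _)) : continuity.
#[local] Hint Extern 1 (continuous (picard_dz _) _) =>
  exact (proj2 (picard_increment_continuous _ _)) : continuity.

Lemma picard_dy_S n x : picard_dy (S n) x = RInt (picard_dz n) 0 x.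
Proof.
  unfold picard_dy, picard_dz.
  change (picard_y (S (S n)) x - picard_y (S n) x)
    with (a + RInt (picard_z (S n)) 0 x - (a + RInt (picard_z n) 0 x)).
  rewrite RInt_Rminus; [ring | |]; apply ex_RInt_continuous_R; continuity_tac.
Qed.

Lemma picard_dz_S n x : picard_dz (S n) x = RInt (fun t => q t * picard_dy n t) 0 x.
Proof.
  unfold picard_dz.
  change (picard_z (S (S n)) x - picard_z (S n) x)
    with (b + RInt (fun t => q t * picard_y (S n) t + r t) 0 x
          - (b + RInt (fun t => q t * picard_y n t + r t) 0 x)).
  rewrite (RInt_ext_R (fun t => q t * picard_dy n t)
             (fun t => (q t * picard_y (S n) t + r t) - (q t * picard_y n t + r t)))
    by (intro t; unfold picard_dy; ring).
  rewrite RInt_Rminus; [ring | |]; apply ex_RInt_continuous_R; continuity_tac.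
Qed.

Lemma picard_increment_bound R0 K L : 1 <= L ->
  (forall t, Rabs t <= R0 -> Rabs (q t) <= L) ->
  (forall t, Rabs t <= R0 -> Rabs (picard_dy 0 t) <= K /\ Rabs (picard_dz 0 t) <= K) ->
  forall n t, Rabs t <= R0 ->
    Rabs (picard_dy n t) <= K * (L * Rabs t) ^ n / INR (fact n) /\
    Rabs (picard_dz n t) <= K * (L * Rabs t) ^ n / INR (fact n).
Proof.
  intros HL Hq H0 n. induction n as [| n IH]; intros t Ht.
  - simpl. replace (K * 1 / 1) with K by field. exact (H0 t Ht).
  - assert (Hs : forall s, Rabs s <= Rabs t -> Rabs s <= R0) by (intros; lra).
    split; [rewrite picard_dy_S | rewrite picard_dz_S];
      (apply abs_RInt_0_le_exp_term; [continuity_tac |]);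
      intros s Hst; destruct (IH s (Hs s Hst)) as [IHy IHz].
    + set (X := K * (L * Rabs s) ^ n / INR (fact n)) in *.
      pose proof (Rabs_pos (picard_dz n s)). nra.
    + rewrite Rabs_mult.
      apply Rmult_le_compat; [apply Rabs_pos | apply Rabs_pos | apply Hq, Hs, Hst | exact IHy].
Qed.

Lemma picard_increments_dominated R0 : 0 <= R0 ->
  exists A : nat -> R, ex_series A /\ forall n t, Rabs t <= R0 ->
    Rabs (picard_dy n t) <= A n /\ Rabs (picard_dz n t) <= A n.
Proof.
  intro HR0.
  destruct (continuous_bounded_on_ball q R0 HR0 q_cont) as [Bq HBq].
  destruct (continuous_bounded_on_ball
              (fun t => Rabs (picard_dy 0 t) + Rabs (picard_dz 0 t)) R0 HR0) as [K HK].
  { intro t. apply continuous_Rplus; apply continuous_Rabs_comp; continuity_tac. }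
  assert (HK0 : forall t, Rabs t <= R0 ->
                  Rabs (picard_dy 0 t) <= K /\ Rabs (picard_dz 0 t) <= K).
  { intros t Ht. specialize (HK t Ht).
    pose proof (Rabs_pos (picard_dy 0 t)). pose proof (Rabs_pos (picard_dz 0 t)).
    rewrite Rabs_pos_eq in HK by lra. split; lra. }
  assert (K_nonneg : 0 <= K).
  { destruct (HK0 0) as [H _]; [rewrite Rabs_R0; exact HR0 |].
    pose proof (Rabs_pos (picard_dy 0 0)). lra. }
  set (L := Rmax 1 Bq).
  assert (HL : 1 <= L) by apply Rmax_l.
  assert (HqL : forall t, Rabs t <= R0 -> Rabs (q t) <= L).
  { intros t Ht. eapply Rle_trans; [apply HBq, Ht | apply Rmax_r]. }
  exists (fun n => K * (L * R0) ^ n / INR (fact n)). split; [apply ex_series_exp_scal |].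
  intros n t Ht.
  assert (Hmono : K * (L * Rabs t) ^ n / INR (fact n) <= K * (L * R0) ^ n / INR (fact n)).
  { unfold Rdiv. apply Rmult_le_compat_r; [left; apply Rinv_0_lt_compat, INR_fact_lt_0 |].
    apply Rmult_le_compat_l; [exact K_nonneg |].
    pose proof (Rabs_pos t). apply pow_incr. split; [| apply Rmult_le_compat_l]; nra. }
  destruct (picard_increment_bound R0 K L HL HqL HK0 n t Ht). split; lra.
Qed.

Lemma picard_increments_summable x :
  ex_series (fun n => picard_dy n x) /\ ex_series (fun n => picard_dz n x).
Proof.
  destruct (picard_increments_dominated (Rabs x) (Rabs_pos x)) as [A [HA Hdom]].
  split; apply (@ex_series_le R_AbsRing R_CompleteNormedModule _ A); try exact HA;
    intro n; apply (Hdom n x (Rle_refl _)).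
Qed.

Lemma picard_telescope n x :
  picard_y (S n) x = a + SP picard_dy n x /\ picard_z (S n) x = b + SP picard_dz n x.
Proof.
  unfold SP. induction n as [| n IH]; simpl sum_f_R0; unfold picard_dy, picard_dz.
  - change (picard_y 0 x) with a. change (picard_z 0 x) with b. split; ring.
  - unfold picard_dy, picard_dz in IH. destruct IH as [IHy IHz]. split; lra.
Qed.

Definition picard_lim_y (x : R) : R := a + Series (fun n => picard_dy n x).

Definition picard_lim_z (x : R) : R := b + Series (fun n => picard_dz n x).

Lemma picard_CVU (rr : posreal) :
  CVU (fun n => picard_y (S n)) picard_lim_y 0 rr /\
  CVU (fun n => picard_z (S n)) picard_lim_z 0 rr.
Proof.
  destruct (picard_increments_dominated rr) as [A [HA Hdom]]; [left; apply cond_pos |].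
  split.
  - apply (CVU_ext (fun n x => a + SP picard_dy n x));
      [intros n x; symmetry; apply picard_telescope |].
    apply (CVU_const_plus (fun n => SP picard_dy n) (fun x => Series (fun n => picard_dy n x))
                          0 rr a).
    apply CVU_SP_dominated; [intro x; apply (proj1 (picard_increments_summable x)) |].
    exists A. split; [exact HA | intros n y Hy; apply Hdom, Hy].
  - apply (CVU_ext (fun n x => b + SP picard_dz n x));
      [intros n x; symmetry; apply picard_telescope |].
    apply (CVU_const_plus (fun n => SP picard_dz n) (fun x => Series (fun n => picard_dz n x))
                          0 rr b).
    apply CVU_SP_dominated; [intro x; apply (proj2 (picard_increments_summable x)) |].
    exists A. split; [exact HA | intros n y Hy; apply Hdom, Hy].
Qed.

Theorem linear_ode_exists : exists y z, solves_ode q r y z /\ y 0 = a /\ z 0 = b.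
Proof.
  exists picard_lim_y, picard_lim_z. split; [split |].
  - apply (is_derive_CVU (fun n => picard_y (S (S n))) (fun n => picard_z (S n))).
    + intro rr. apply (CVU_shift (fun n => picard_y (S n))), (picard_CVU rr).
    + intro rr. apply (picard_CVU rr).
    + intros n x. apply (picard_derive (S n) x).
  - apply (is_derive_CVU (fun n => picard_z (S (S n)))
             (fun n x => q x * picard_y (S n) x + r x)).
    + intro rr. apply (CVU_shift (fun n => picard_z (S n))), (picard_CVU rr).
    + intro rr.
      apply (CVU_mul_plus (fun n => picard_y (S n))); [exact q_cont | apply (picard_CVU rr)].
    + intros n x. apply (picard_derive (S n) x).
  - unfold picard_lim_y, picard_lim_z.
    rewrite (Series_eq_0 (fun n => picard_dy n 0)), (Series_eq_0 (fun n => picard_dz n 0));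
      [split; ring | |]; intro n; unfold picard_dy, picard_dz;
      destruct (picard_at_0 n), (picard_at_0 (S n)); lra.
Qed.

End Picard.

Lemma energy_zero_forward (E dE : R -> R) K X : 0 <= X ->
  (forall t, is_derive E t (dE t)) -> (forall t, 0 <= E t) -> E 0 = 0 ->
  (forall t, 0 <= t <= X -> dE t <= K * E t) -> E X = 0.
Proof.
  intros HX HE Epos E0 Hb.
  assert (HG : forall t, is_derive (fun t => E t * exp (- K * t)) t
                 ((dE t - K * E t) * exp (- K * t))).
  { intro t. replace ((dE t - K * E t) * exp (- K * t))
      with (dE t * exp (- K * t) + E t * (- K * exp (- K * t))) by ring.
    apply (is_derive_Rmult E (fun t => exp (- K * t))); [apply HE |].
    auto_derive; [exact I | ring]. }
  destruct (MVT_gen (fun t => E t * exp (- K * t)) 0 X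
              (fun t => (dE t - K * E t) * exp (- K * t)) (fun t _ => HG t)) as [c [Hc Hmvt]].
  { intros t _. apply continuity_pt_filterlim. exact (continuous_of_is_derive _ _ _ (HG t)). }
  rewrite Rmin_left, Rmax_right in Hc by lra.
  rewrite E0, Rmult_0_l, Rminus_0_r, Rminus_0_r in Hmvt.
  pose proof (Hb c Hc). pose proof (exp_pos (- K * c)). pose proof (exp_pos (- K * X)).
  assert (E X * exp (- K * X) <= 0).
  { rewrite Hmvt. apply Rmult_le_0_r; [| exact HX]. apply Rmult_le_0_r; lra. }
  pose proof (Epos X). nra.
Qed.

Lemma energy_zero (E dE : R -> R) K X :
  (forall t, is_derive E t (dE t)) -> (forall t, 0 <= E t) -> E 0 = 0 ->
  (forall t, Rabs t <= Rabs X -> Rabs (dE t) <= K * E t) -> E X = 0.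
Proof.
  intros HE Epos E0 Hb. destruct (Rle_or_lt 0 X) as [HX | HX].
  - apply (energy_zero_forward E dE K X HX HE Epos E0).
    intros t Ht. eapply Rle_trans; [apply Rle_abs | apply Hb]. rewrite !Rabs_pos_eq; lra.
  - replace X with (- - X) by ring.
    apply (energy_zero_forward (fun t => E (- t)) (fun t => - dE (- t)) K (- X)); [lra | | | |].
    + intro t. replace (- dE (- t)) with (-1 * dE (- t)) by ring.
      apply (is_derive_Rcomp E (fun t => - t)); [apply HE | auto_derive; [exact I | ring]].
    + intro t. apply Epos.
    + rewrite Ropp_0. exact E0.
    + intros t Ht. eapply Rle_trans; [apply Rle_abs | rewrite Rabs_Ropp; apply Hb].
      rewrite Rabs_Ropp, Rabs_pos_eq, Rabs_left; lra.
Qed.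

Lemma linear_ode_unique (q y z : R -> R) : (forall t, continuous q t) ->
  solves_ode q (fun _ => 0) y z -> y 0 = 0 -> z 0 = 0 -> forall x, y x = 0 /\ z x = 0.
Proof.
  intros Hq [Hy Hz] Y0 Z0 X.
  destruct (continuous_bounded_on_ball q (Rabs X) (Rabs_pos X) Hq) as [B HB].
  set (E := fun t => y t * y t + z t * z t).
  assert (HE : forall t, is_derive E t (2 * y t * z t * (1 + q t))).
  { intro t. replace (2 * y t * z t * (1 + q t))
      with (z t * y t + y t * z t + ((q t * y t + 0) * z t + z t * (q t * y t + 0))) by ring.
    apply is_derive_Rplus; apply is_derive_Rmult; auto. }
  assert (HEX : E X = 0).
  { apply (energy_zero E _ (1 + B) X HE).
    { intro t. unfold E. nra. }
    { unfold E. rewrite Y0, Z0. ring. }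
    intros t Ht. specialize (HB t Ht).
    assert (Hyz : Rabs (2 * y t * z t) <= E t).
    { unfold E. apply Rabs_le.
      pose proof (Rle_0_sqr (y t + z t)). pose proof (Rle_0_sqr (y t - z t)).
      unfold Rsqr in *. split; lra. }
    assert (Hq1 : Rabs (1 + q t) <= 1 + B).
    { eapply Rle_trans; [apply Rabs_triang | rewrite Rabs_R1; lra]. }
    rewrite Rabs_mult, Rmult_comm. apply Rmult_le_compat; auto using Rabs_pos. }
  unfold E in HEX. split; nra.
Qed.

Lemma solves_ode_twice_diff (q r y z : R -> R) : solves_ode q r y z ->
  twice_diff y /\ forall x, d2 y x = q x * y x + r x.
Proof.
  intros [Hy Hz].
  assert (HD : forall x, Derive y x = z x) by (intro x; apply is_derive_unique, Hy).
  split.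
  - intro x. split; [exists (z x); apply Hy |].
    apply (ex_derive_ext z); [intro t; symmetry; apply HD | exists (q x * y x + r x); apply Hz].
  - intro x. unfold d2. rewrite (Derive_ext _ _ x HD). apply is_derive_unique, Hz.
Qed.

Lemma solves_ode_comb (q r1 r2 y1 z1 y2 z2 : R -> R) c1 c2 :
  solves_ode q r1 y1 z1 -> solves_ode q r2 y2 z2 ->
  solves_ode q (fun x => c1 * r1 x + c2 * r2 x)
    (fun x => c1 * y1 x + c2 * y2 x) (fun x => c1 * z1 x + c2 * z2 x).
Proof.
  intros [Hy1 Hz1] [Hy2 Hz2].
  split; intro x.
  - apply is_derive_Rplus; apply is_derive_scal; auto.
  - replace (q x * (c1 * y1 x + c2 * y2 x) + (c1 * r1 x + c2 * r2 x))
      with (c1 * (q x * y1 x + r1 x) + c2 * (q x * y2 x + r2 x)) by ring.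
    apply is_derive_Rplus; apply is_derive_scal; auto.
Qed.

Lemma solves_ode_periodic (q r y z : R -> R) :
  (forall t, continuous q t) -> periodic1 q -> periodic1 r ->
  solves_ode q r y z -> y 1 = y 0 -> z 1 = z 0 -> periodic1 y.
Proof.
  intros Hq Pq Pr [Hy Hz] Y1 Z1.
  assert (Hdiff : solves_ode q (fun _ => 0) (fun t => y (t + 1) - y t) (fun t => z (t + 1) - z t)).
  { split; intro t.
    - apply (is_derive_minus (fun t => y (t + 1)) y); [apply is_derive_shift |]; auto.
    - replace (q t * (y (t + 1) - y t) + 0)
        with ((q (t + 1) * y (t + 1) + r (t + 1)) - (q t * y t + r t)) by (rewrite Pq, Pr; ring).
      apply (is_derive_minus (fun t => z (t + 1)) z);
        [apply (is_derive_shift z (fun x => q x * y x + r x)) |]; auto. }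
  intro x. destruct (linear_ode_unique q _ _ Hq Hdiff) with x as [Hx _];
    rewrite ?Rplus_0_l; lra.
Qed.

Lemma singular_2x2_kernel a11 a12 a21 a22 : a11 * a22 - a12 * a21 = 0 ->
  exists k1 k2, (k1 <> 0 \/ k2 <> 0) /\ k1 * a11 + k2 * a12 = 0 /\ k1 * a21 + k2 * a22 = 0.
Proof.
  intro Hdet.
  destruct (classic (a11 = 0 /\ a12 = 0)) as [[H11 H12] | Hrow1].
  - destruct (classic (a21 = 0 /\ a22 = 0)) as [[H21 H22] | Hrow2].
    + exists 1, 0. subst. split; [left; lra | split; ring].
    + exists a22, (- a21). apply not_and_or in Hrow2. subst.
      split; [destruct Hrow2; [right | left]; lra | split; ring].
  - exists a12, (- a11). apply not_and_or in Hrow1.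
    split; [destruct Hrow1; [right | left]; lra | split; lra].
Qed.

Section PeriodicSolutions.

Variables q r : R -> R.

Hypotheses (q_cont : forall t, continuous q t) (q_periodic : periodic1 q)
  (homogeneous_trivial : forall y, periodic1 y -> twice_diff y ->
                           (forall x, d2 y x = q x * y x) -> forall x, y x = 0).

Lemma homogeneous_periodic_data_zero (r0 y z : R -> R) : (forall x, r0 x = 0) ->
  solves_ode q r0 y z -> y 1 = y 0 -> z 1 = z 0 -> y 0 = 0 /\ z 0 = 0.
Proof.
  intros Hr0 S Y1 Z1.
  destruct (solves_ode_twice_diff _ _ _ _ S) as [T D2].
  assert (Hzero : forall x, y x = 0).
  { apply homogeneous_trivial; [| exact T |].
    - apply (solves_ode_periodic q r0 y z); auto. intro x. rewrite !Hr0. reflexivity.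
    - intro x. rewrite D2, Hr0. ring. }
  split; [apply Hzero |].
  assert (Hz0 : is_derive (fun _ : R => 0) 0 (z 0))
    by (apply (is_derive_ext y); [exact Hzero | apply (proj1 S)]).
  rewrite <- (is_derive_unique _ _ _ Hz0). apply Derive_const.
Qed.

Theorem periodic_solution_exists : (forall t, continuous r t) -> periodic1 r ->
  exists y, periodic1 y /\ twice_diff y /\ forall x, d2 y x = q x * y x + r x.
Proof.
  intros r_cont r_periodic.
  assert (H0 : forall t, continuous (fun _ : R => 0) t) by (intro t; apply continuous_Rconst).
  destruct (linear_ode_exists q _ 1 0 q_cont H0) as [y1 [z1 [S1 [Y1 Z1]]]].
  destruct (linear_ode_exists q _ 0 1 q_cont H0) as [y2 [z2 [S2 [Y2 Z2]]]].
  destruct (linear_ode_exists q r 0 0 q_cont r_cont) as [yp [zp [Sp [Yp Zp]]]].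
  assert (Hdet : (y1 1 - 1) * (z2 1 - 1) - y2 1 * z1 1 <> 0).
  { intro Hsing. destruct (singular_2x2_kernel _ _ _ _ Hsing) as [k1 [k2 [Hnz [E1 E2]]]].
    assert (Hr0 : forall x : R, k1 * 0 + k2 * 0 = 0) by (intro; ring).
    destruct (homogeneous_periodic_data_zero (fun _ => k1 * 0 + k2 * 0) _ _ Hr0
                (solves_ode_comb _ _ _ _ _ _ _ k1 k2 S1 S2)) as [Hy0 Hz0]; cbv beta.
    - rewrite Y1, Y2. lra.
    - rewrite Z1, Z2. lra.
    - rewrite Y1, Y2 in Hy0. rewrite Z1, Z2 in Hz0. lra. }
  set (det := (y1 1 - 1) * (z2 1 - 1) - y2 1 * z1 1) in Hdet.
  (* Cramer's rule for the initial data making [c1 y1 + c2 y2 + yp] periodic. *)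
  set (c1 := (y2 1 * zp 1 - (z2 1 - 1) * yp 1) / det).
  set (c2 := (z1 1 * yp 1 - (y1 1 - 1) * zp 1) / det).
  pose proof (solves_ode_comb _ _ _ _ _ _ _ 1 1
                (solves_ode_comb _ _ _ _ _ _ _ c1 c2 S1 S2) Sp) as S.
  destruct (solves_ode_twice_diff _ _ _ _ S) as [T D2].
  eexists. split; [| split; [exact T |]].
  - eapply solves_ode_periodic; [exact q_cont | exact q_periodic | | exact S | |].
    + intro x. rewrite r_periodic. reflexivity.
    + cbv beta. rewrite Yp, Y1, Y2. unfold c1, c2, det. field. exact Hdet.
    + cbv beta. rewrite Zp, Z1, Z2. unfold c1, c2, det. field. exact Hdet.
  - intro x. rewrite D2. ring.
Qed.

End PeriodicSolutions.

(** * Periodic functions and the inner product of [L^2(0,1)] *)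

Lemma twice_diff_continuous f : twice_diff f -> forall x, continuous f x.
Proof. intros T x. destruct (T x) as [[l Hl] _]. exact (continuous_of_is_derive f x l Hl). Qed.

Lemma periodic1_Derive f : periodic1 f -> (forall x, ex_derive f x) -> periodic1 (Derive f).
Proof.
  intros P Hd x. symmetry. apply is_derive_unique.
  apply (is_derive_ext (fun t => f (t + 1))); [intro t; apply P |].
  apply (is_derive_shift f (Derive f)). intro t. apply Derive_correct, Hd.
Qed.

Lemma green_periodic (f g : R -> R) : periodic1 f -> periodic1 g -> twice_diff f -> twice_diff g ->
  (forall x, continuous (d2 f) x) -> (forall x, continuous (d2 g) x) ->
  RInt (fun x => d2 f x * g x - f x * d2 g x) 0 1 = 0.
Proof.
  intros Pf Pg Tf Tg Cf Cg.
  pose proof (twice_diff_continuous f Tf). pose proof (twice_diff_continuous g Tg).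
  set (W := fun x => Derive f x * g x - f x * Derive g x).
  assert (HW : forall x, is_derive W x (d2 f x * g x - f x * d2 g x)).
  { intro x. destruct (Tf x) as [Hf1 Hf2]. destruct (Tg x) as [Hg1 Hg2].
    replace (d2 f x * g x - f x * d2 g x)
      with ((d2 f x * g x + Derive f x * Derive g x) - (Derive f x * Derive g x + f x * d2 g x))
      by ring.
    apply (is_derive_minus (fun x => Derive f x * g x) (fun x => f x * Derive g x));
      apply is_derive_Rmult; apply Derive_correct; assumption. }
  rewrite (is_RInt_unique _ _ _ _ (is_RInt_derive W _ 0 1 (fun x _ => HW x)
                                       (fun x _ => ltac:(continuity_tac)))).
  pose proof (Pf 0) as Ef. pose proof (Pg 0) as Eg.
  pose proof (periodic1_Derive f Pf (fun x => proj1 (Tf x)) 0) as Edf.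
  pose proof (periodic1_Derive g Pg (fun x => proj1 (Tg x)) 0) as Edg.
  rewrite Rplus_0_l in Ef, Eg, Edf, Edg.
  unfold W, minus, plus, opp; simpl. rewrite Ef, Eg, Edf, Edg. ring.
Qed.

Lemma periodic1_shift_Z f : periodic1 f -> forall (k : Z) x, f (x + IZR k) = f x.
Proof.
  intros P k x. induction k as [| k IH | k IH] using Z.peano_ind.
  - rewrite Rplus_0_r. reflexivity.
  - rewrite succ_IZR, <- Rplus_assoc, P. exact IH.
  - rewrite <- IH. replace (x + IZR k) with (x + IZR (Z.pred k) + 1)
      by (rewrite <- Z.sub_1_r, minus_IZR; ring).
    symmetry. apply P.
Qed.

Lemma periodic1_reduce f : periodic1 f -> forall x, exists x0, 0 <= x0 <= 1 /\ f x = f x0.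
Proof.
  intros P x. destruct (base_Int_part x) as [H1 H2].
  exists (x - IZR (Int_part x)). split; [lra |].
  rewrite <- (periodic1_shift_Z f P (Int_part x) (x - IZR (Int_part x))). f_equal. ring.
Qed.

Lemma continuous_locally_neq0 (h : R -> R) x0 : continuous h x0 -> h x0 <> 0 ->
  locally x0 (fun y => h y <> 0).
Proof.
  intros Hh Hne. apply (Hh (fun v => v <> 0)). exists (mkposreal _ (Rabs_pos_lt _ Hne)).
  intros v Hv Hv0. rewrite Hv0 in Hv. unfold ball in Hv; simpl in Hv.
  unfold AbsRing_ball, abs, minus, plus, opp in Hv; simpl in Hv.
  rewrite Rplus_0_l, Rabs_Ropp in Hv. lra.
Qed.

Lemma RInt_sqr_pos (h : R -> R) x0 : (forall t, continuous h t) -> 0 <= x0 <= 1 -> h x0 <> 0 ->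
  0 < RInt (fun y => h y ^ 2) 0 1.
Proof.
  intros Hh Hx0 Hne.
  assert (Hsq : forall t, continuous (fun y => h y ^ 2) t).
  { intro t. apply continuous_Rsqr, Hh. }
  destruct (continuous_locally_neq0 h x0 (Hh x0) Hne) as [delta Hdelta].
  pose proof (cond_pos delta).
  set (c := Rmax 0 (x0 - delta / 2)). set (d := Rmin 1 (x0 + delta / 2)).
  assert (Hc : 0 <= c <= x0) by (split; [apply Rmax_l | apply Rmax_lub; lra]).
  assert (Hd : x0 <= d <= 1) by (split; [apply Rmin_glb; lra | apply Rmin_l]).
  assert (Hcd : c < d).
  { unfold c, d, Rmax, Rmin.
    destruct (Rle_dec 0 (x0 - delta / 2)), (Rle_dec 1 (x0 + delta / 2)); lra. }
  assert (Hcx : x0 - delta / 2 <= c) by apply Rmax_r.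
  assert (Hdx : d <= x0 + delta / 2) by apply Rmin_r.
  assert (Hmid : 0 < RInt (fun y => h y ^ 2) c d).
  { apply RInt_gt_0; [exact Hcd | | intros; apply Hsq].
    intros y Hy. apply pow2_gt_0, Hdelta.
    unfold ball; simpl; unfold AbsRing_ball, abs, minus, plus, opp; simpl.
    apply Rabs_def1; lra. }
  assert (Hex : forall u v, ex_RInt (fun y => h y ^ 2) u v)
    by (intros; apply ex_RInt_continuous_R, Hsq).
  assert (Hleft : 0 <= RInt (fun y => h y ^ 2) 0 c)
    by (apply RInt_ge_0; [lra | apply Hex | intros; apply pow2_ge_0]).
  assert (Hright : 0 <= RInt (fun y => h y ^ 2) d 1)
    by (apply RInt_ge_0; [lra | apply Hex | intros; apply pow2_ge_0]).
  rewrite <- (RInt_Chasles _ 0 c 1), <- (RInt_Chasles _ c d 1) by apply Hex.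
  unfold plus; simpl in *. lra.
Qed.

Lemma periodic1_RInt_sqr_eq0 (h : R -> R) : (forall t, continuous h t) -> periodic1 h ->
  RInt (fun y => h y ^ 2) 0 1 = 0 -> forall x, h x = 0.
Proof.
  intros Hh Ph H0 x. destruct (periodic1_reduce h Ph x) as [x0 [Hx0 ->]].
  destruct (Req_dec (h x0) 0) as [| Hne]; [assumption |].
  pose proof (RInt_sqr_pos h x0 Hh Hx0 Hne). lra.
Qed.

Section L2.

Variables (f g p : R -> R).

Hypotheses (f_cont : forall t, continuous f t) (g_cont : forall t, continuous g t)
  (p_cont : forall t, continuous p t).

#[local] Hint Resolve f_cont g_cont p_cont : continuity.

Lemma L2ip_plus : L2ip (fun y => f y + g y) p = L2ip f p + L2ip g p.
Proof.
  unfold L2ip. rewrite <- RInt_Rplus by (apply ex_RInt_continuous_R; continuity_tac).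
  apply RInt_ext_R. intro y. ring.
Qed.

Lemma L2ip_minus : L2ip (fun y => f y - g y) p = L2ip f p - L2ip g p.
Proof.
  unfold L2ip. rewrite <- RInt_Rminus by (apply ex_RInt_continuous_R; continuity_tac).
  apply RInt_ext_R. intro y. ring.
Qed.

Lemma L2ip_scal_l c : L2ip (fun y => c * f y) p = c * L2ip f p.
Proof.
  unfold L2ip. rewrite <- RInt_Rscal by (apply ex_RInt_continuous_R; continuity_tac).
  apply RInt_ext_R. intro y. ring.
Qed.

End L2.

Definition parseval_family (psi : nat -> R -> R) : Prop :=
  forall f : R -> R, ex_RInt f 0 1 -> ex_RInt (fun y => f y ^ 2) 0 1 ->
    is_series (fun n => (L2ip f (psi n)) ^ 2) (RInt (fun y => f y ^ 2) 0 1).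

Lemma parseval_L2ip (psi : nat -> R -> R) (f g : R -> R) : parseval_family psi ->
  (forall n t, continuous (psi n) t) -> (forall t, continuous f t) -> (forall t, continuous g t) ->
  is_series (fun n => L2ip f (psi n) * L2ip g (psi n)) (L2ip f g).
Proof.
  intros Hpar Hpsi Hf Hg.
  assert (Hsum : forall u : R -> R, (forall t, continuous u t) ->
            is_series (fun n => L2ip u (psi n) ^ 2) (RInt (fun y => u y ^ 2) 0 1)).
  { intros u Hu. apply Hpar; apply ex_RInt_continuous_R; [exact Hu |].
    intro t. apply continuous_Rsqr, Hu. }
  assert (Hterm : forall n, / 4 * (L2ip (fun y => f y + g y) (psi n) ^ 2
                                  - L2ip (fun y => f y - g y) (psi n) ^ 2)
                            = L2ip f (psi n) * L2ip g (psi n)).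
  { intro n. rewrite L2ip_plus, L2ip_minus; auto. field. }
  assert (Hlim : / 4 * (RInt (fun y => (f y + g y) ^ 2) 0 1 - RInt (fun y => (f y - g y) ^ 2) 0 1)
                 = L2ip f g).
  { unfold L2ip. rewrite <- RInt_Rminus, <- RInt_Rscal.
    - apply RInt_ext_R. intro y. field.
    - apply ex_RInt_continuous_R. continuity_tac.
    - apply ex_RInt_continuous_R. continuity_tac.
    - apply ex_RInt_continuous_R. continuity_tac. }
  rewrite <- Hlim. apply (is_series_ext _ _ _ Hterm).
  exact (is_series_scal (/ 4) _ _ (is_series_minus _ _ _ _
                                  (Hsum (fun y => f y + g y) ltac:(continuity_tac))
                                  (Hsum (fun y => f y - g y) ltac:(continuity_tac)))).
Qed.

Lemma parseval_orthogonal_zero (psi : nat -> R -> R) (h : R -> R) : parseval_family psi ->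
  (forall t, continuous h t) -> periodic1 h -> (forall n, L2ip h (psi n) = 0) ->
  forall x, h x = 0.
Proof.
  intros Hpar Hh Ph Horth. apply periodic1_RInt_sqr_eq0; [exact Hh | exact Ph |].
  assert (Hsq : forall t, continuous (fun y => h y ^ 2) t) by continuity_tac.
  pose proof (Hpar h (ex_RInt_continuous_R h 0 1 Hh) (ex_RInt_continuous_R _ 0 1 Hsq)) as P.
  rewrite <- (is_series_unique _ _ P).
  apply Series_eq_0. intro n. rewrite Horth. ring.
Qed.

(** * The nonlocal eigenvalue problem *)

Section NonlocalProblem.

Variables (D kappa : R) (U : R -> R).

Hypotheses (D_pos : 0 < D) (kappa_pos : 0 < kappa) (steady : steady_state D kappa U).

Lemma Ccoef_continuous x : continuous (Ccoef U) x.
Proof.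
  destruct steady as [_ [TU _]].
  apply (continuous_comp U exp); [apply twice_diff_continuous, TU |].
  apply (continuous_of_is_derive _ _ _ (is_derive_exp _)).
Qed.

Lemma Ccoef_periodic : periodic1 (Ccoef U).
Proof. destruct steady as [PU _]. intro x. unfold Ccoef. rewrite PU. reflexivity. Qed.

Lemma intExpU_pos : 0 < intExpU U.
Proof.
  apply RInt_gt_0; [lra | intros; apply exp_pos | intros x _; apply Ccoef_continuous].
Qed.

Lemma Acoef_continuous x : continuous (Acoef kappa U) x.
Proof.
  apply (continuous_ext (fun t => kappa / intExpU U * Ccoef U t - 1)).
  - intro t. unfold Acoef, Ccoef.
    change (kappa / intExpU U * exp (U t) - 1 = kappa * exp (U t) / intExpU U - 1).
    field. apply Rgt_not_eq, intExpU_pos.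
  - continuity_tac. apply Ccoef_continuous.
Qed.

Lemma Acoef_periodic : periodic1 (Acoef kappa U).
Proof. destruct steady as [PU _]. intro x. unfold Acoef. rewrite PU. reflexivity. Qed.

Lemma Mcoef_pos : 0 < Mcoef kappa U.
Proof. apply Rdiv_lt_0_compat; [exact kappa_pos | apply pow_lt, intExpU_pos]. Qed.

#[local] Hint Resolve Ccoef_continuous Acoef_continuous : continuity.

Lemma d2_continuous_of_equation nu phi F : twice_diff phi -> (forall x, continuous F x) ->
  (forall x, D * d2 phi x + (Acoef kappa U x - nu) * phi x = F x) ->
  forall x, continuous (d2 phi) x.
Proof.
  intros T HF E x. pose proof (twice_diff_continuous phi T).
  apply (continuous_ext (fun t => / D * (F t - (Acoef kappa U t - nu) * phi t))).
  - intro t. rewrite <- E.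
    change (/ D * (D * d2 phi t + (Acoef kappa U t - nu) * phi t - (Acoef kappa U t - nu) * phi t)
            = d2 phi t).
    field. lra.
  - continuity_tac.
Qed.

Lemma L2ip_local_eigenpair nu lam psi phi F :
  periodic1 phi -> twice_diff phi -> (forall x, continuous F x) ->
  (forall x, D * d2 phi x + (Acoef kappa U x - nu) * phi x = F x) ->
  local_eigenpair D kappa U lam psi ->
  L2ip F psi = (lam - nu) * L2ip phi psi.
Proof.
  intros Pphi Tphi HF Ephi [Ppsi [Tpsi Epsi]].
  pose proof (twice_diff_continuous phi Tphi). pose proof (twice_diff_continuous psi Tpsi).
  pose proof (d2_continuous_of_equation nu phi F Tphi HF Ephi).
  pose proof (d2_continuous_of_equation lam psi (fun _ => 0) Tpsi (continuous_Rconst 0) Epsi).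
  assert (Hpt : forall x, F x * psi x - (lam - nu) * (phi x * psi x)
                          = D * (d2 phi x * psi x - phi x * d2 psi x)).
  { intro x. rewrite <- Ephi.
    replace (D * (d2 phi x * psi x - phi x * d2 psi x))
      with (D * d2 phi x * psi x - phi x * (D * d2 psi x)) by ring.
    replace (D * d2 psi x) with (- (Acoef kappa U x - lam) * psi x) by (specialize (Epsi x); lra).
    ring. }
  unfold L2ip. apply Rminus_diag_uniq.
  rewrite <- RInt_Rscal, <- RInt_Rminus by (apply ex_RInt_continuous_R; continuity_tac).
  rewrite (RInt_ext_R _ _ _ _ Hpt), RInt_Rscal by (apply ex_RInt_continuous_R; continuity_tac).
  rewrite green_periodic by assumption. ring.
Qed.

Variables (lam : nat -> R) (psi : nat -> R -> R) (nu : R).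

Hypotheses (spectral : local_spectral_data D kappa U lam psi) (nu_not_eig : forall n, nu <> lam n).

Lemma psi_continuous n x : continuous (psi n) x.
Proof.
  destruct spectral as [Heig _]. destruct (Heig n) as [_ [T _]].
  exact (twice_diff_continuous _ T x).
Qed.

#[local] Hint Resolve psi_continuous : continuity.

Lemma lam_sub_nu_neq0 n : lam n - nu <> 0.
Proof. intro H. apply (nu_not_eig n). lra. Qed.

Lemma periodic_kernel_trivial phi : periodic1 phi -> twice_diff phi ->
  (forall x, D * d2 phi x + (Acoef kappa U x - nu) * phi x = 0) -> forall x, phi x = 0.
Proof.
  intros P T E. destruct spectral as [Heig [_ [Hpar _]]].
  apply (parseval_orthogonal_zero psi); [exact Hpar | apply twice_diff_continuous, T | exact P |].
  intro n. apply (Rmult_eq_reg_l (lam n - nu)); [| apply lam_sub_nu_neq0].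
  rewrite <- (L2ip_local_eigenpair nu (lam n) (psi n) phi (fun _ => 0) P T
                (continuous_Rconst 0) E (Heig n)).
  unfold L2ip. rewrite (RInt_ext_R _ (fun _ => 0)), RInt_R0 by (intro; ring). ring.
Qed.

Lemma secular_series phi s : periodic1 phi -> twice_diff phi ->
  (forall x, D * d2 phi x + (Acoef kappa U x - nu) * phi x = s * Mcoef kappa U * Ccoef U x) ->
  is_series (fun n => s * Mcoef kappa U * (beta U psi n ^ 2 / (lam n - nu))) (L2ip (Ccoef U) phi).
Proof.
  intros P T E. destruct spectral as [Heig [_ [Hpar _]]].
  assert (HF : forall x, continuous (fun x => s * Mcoef kappa U * Ccoef U x) x) by continuity_tac.
  assert (Hcoef : forall n, L2ip phi (psi n) = s * Mcoef kappa U * beta U psi n / (lam n - nu)).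
  { intro n.
    pose proof (L2ip_local_eigenpair nu (lam n) (psi n) phi _ P T HF E (Heig n)) as H.
    rewrite L2ip_scal_l in H by continuity_tac. unfold beta. rewrite H. field.
    apply lam_sub_nu_neq0. }
  assert (Hterm : forall n, beta U psi n * L2ip phi (psi n)
                            = s * Mcoef kappa U * (beta U psi n ^ 2 / (lam n - nu))).
  { intro n. rewrite Hcoef. field. apply lam_sub_nu_neq0. }
  apply (is_series_ext _ _ _ Hterm).
  apply parseval_L2ip; [exact Hpar | exact psi_continuous | exact Ccoef_continuous |].
  apply twice_diff_continuous, T.
Qed.

Lemma nonlocal_eigenvalue_secular : nonlocal_eigenvalue D kappa U nu ->
  is_series (fun n => beta U psi n ^ 2 / (lam n - nu)) (1 / Mcoef kappa U).
Proof.
  intros [phi [P [T [[x0 Hx0] E]]]]. pose proof Mcoef_pos as HM.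
  set (I := RInt (fun y => Ccoef U y * phi y) 0 1) in E.
  assert (E' : forall x, D * d2 phi x + (Acoef kappa U x - nu) * phi x
                         = I * Mcoef kappa U * Ccoef U x) by (intro x; rewrite E; ring).
  assert (HI : I <> 0).
  { intro HI0. apply Hx0, (periodic_kernel_trivial phi P T). intro x. rewrite E', HI0. ring. }
  assert (Hterm : forall n, / (I * Mcoef kappa U)
                              * (I * Mcoef kappa U * (beta U psi n ^ 2 / (lam n - nu)))
                            = beta U psi n ^ 2 / (lam n - nu)).
  { intro n. field. split; [apply lam_sub_nu_neq0 | split; lra]. }
  apply (is_series_ext _ _ _ Hterm).
  replace (1 / Mcoef kappa U) with (/ (I * Mcoef kappa U) * L2ip (Ccoef U) phi)
    by (change (L2ip (Ccoef U) phi) with I; field; split; lra).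
  exact (is_series_scal _ _ _ (secular_series phi I P T E')).
Qed.

Lemma periodic_forced_solution_exists F : (forall x, continuous F x) -> periodic1 F ->
  exists phi, periodic1 phi /\ twice_diff phi /\
    forall x, D * d2 phi x + (Acoef kappa U x - nu) * phi x = F x.
Proof.
  intros HF PF.
  destruct (periodic_solution_exists (fun x => - / D * (Acoef kappa U x - nu))) with
    (r := fun x => / D * F x) as [phi [P [T E]]].
  - continuity_tac.
  - intro x. cbv beta. rewrite Acoef_periodic. reflexivity.
  - intros y Py Ty Ey. apply (periodic_kernel_trivial y Py Ty). intro x. rewrite Ey. field. lra.
  - continuity_tac.
  - intro x. cbv beta. rewrite PF. reflexivity.
  - exists phi. split; [exact P | split; [exact T |]]. intro x. rewrite E. field. lra.
Qed.

Lemma secular_nonlocal_eigenvalue :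
  is_series (fun n => beta U psi n ^ 2 / (lam n - nu)) (1 / Mcoef kappa U) ->
  nonlocal_eigenvalue D kappa U nu.
Proof.
  intro Hser. pose proof Mcoef_pos as HM.
  destruct (periodic_forced_solution_exists (fun x => 1 * Mcoef kappa U * Ccoef U x))
    as [phi [P [T E]]].
  { continuity_tac. }
  { intro x. rewrite Ccoef_periodic. reflexivity. }
  assert (HI : L2ip (Ccoef U) phi = 1).
  { rewrite <- (is_series_unique _ _ (secular_series phi 1 P T E)).
    apply is_series_unique.
    assert (Hterm : forall n, Mcoef kappa U * (beta U psi n ^ 2 / (lam n - nu))
                              = 1 * Mcoef kappa U * (beta U psi n ^ 2 / (lam n - nu)))
      by (intro n; ring).
    apply (is_series_ext _ _ _ Hterm).
    replace 1 with (Mcoef kappa U * (1 / Mcoef kappa U)) by (field; lra).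
    exact (is_series_scal _ _ _ Hser). }
  exists phi. split; [exact P | split; [exact T | split]].
  - apply not_all_not_ex. intro Hzero.
    assert (L2ip (Ccoef U) phi = 0); [| lra].
    unfold L2ip. rewrite (RInt_ext_R _ (fun _ => 0)), RInt_R0; [reflexivity |].
    intro y. specialize (Hzero y). apply NNPP in Hzero. rewrite Hzero. ring.
  - intro x. change (RInt (fun y => Ccoef U y * phi y) 0 1) with (L2ip (Ccoef U) phi).
    rewrite HI, E. ring.
Qed.

End NonlocalProblem.

Theorem mainTheorem8 :
  forall (D kappa : R) (U : R -> R) (lam : nat -> R) (psi : nat -> R -> R),
    0 < D -> 0 < kappa ->
    steady_state D kappa U -> nonconstant U ->
    local_spectral_data D kappa U lam psi ->
    forall nu : R, (forall n, nu <> lam n) ->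
      (nonlocal_eigenvalue D kappa U nu <->
       is_series (fun n => (beta U psi n) ^ 2 / (lam n - nu))
                 (1 / Mcoef kappa U)).
Proof.
  intros D kappa U lam psi HD Hk Hsteady _ Hspec nu Hnu. split.
  - exact (nonlocal_eigenvalue_secular D kappa U HD Hk Hsteady lam psi nu Hspec Hnu).
  - exact (secular_nonlocal_eigenvalue D kappa U HD Hk Hsteady lam psi nu Hspec Hnu).
Qed.
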